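(* Let $\sigma\in\{+1,-1\}$, $k\ge1$, and let $a_0,a_1,\dots,a_k\in\mathbb Z^m$ be such that $a_0\notin\{0,a_1,\dots,a_k\}$ and $a_1,\dots,a_k$ are linearly independent. Suppose $n_0,n_1,\dots,n_k\in\mathbb Z$ with $n_0\ne0$ satisfy $\sum_{i=0}^kn_ia_i=0$. Then $$\sum_{i=0}^kn_i\,C(a_i,\sigma)\ne0\quad\text{in }\mathbb Z[e_1,\dots,e_m].$$ Equivalently: in a possible combinatorial graph whose vertices of a given color, other than the root $(0,+)$, span a lattice of rank $k$, either there are exactly $k$ such vertices or the graph produces an avoidable resonance.
   Context: Identify $a=\sum_ia_ie_i\in\mathbb Z^m$ with a linear form in the polynomial ring $\mathbb Z[e_1,\dots,e_m]$; $a^2$ is its square in this ring and $a^{(2)}:=\sum_ia_ie_i^2$. For $\sigma=\pm1$ set $C(a,\sigma)=\frac{\sigma}{2}(a^2+a^{(2)})$. (A vertex $(a,\sigma)$ of a graph in $\mathbb Z^m\times\{\pm\}$ has color black if $\sigma=+$, red if $\sigma=-$; a relation $\sum n_aa=0$ among vertices produces an avoidable resonance if $\sum n_aC(a,\sigma_a)\ne0$.) *)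

From HB Require Import structures.
From mathcomp Require Import all_boot all_order all_algebra.
Set Implicit Arguments. Unset Strict Implicit. Unset Printing Implicit Defensive.
Import Order.TTheory GRing.Theory Num.Theory.
Local Open Scope ring_scope.

(* A homogeneous quadratic polynomial in Z[e_1..e_m] (more generally Q[e])
   is represented by its coefficients: for i <= j, [p i j] is the
   coefficient of the monomial e_i * e_j (e_i^2 when i = j); entries with
   i > j are 0 by convention. *)
Definition quadpoly (m : nat) := 'I_m -> 'I_m -> rat.

(* coefficients of a^2, the square of the linear form sum_i a_i e_i *)
Definition lin_sq (m : nat) (a : 'rV[int]_m) : quadpoly m :=
  fun i j => if i == j then ((a 0 i) ^+ 2)%:~R
             else if (i < j)%N then (2 * a 0 i * a 0 j)%:~R else 0.

Definition lin_sq2 (m : nat) (a : 'rV[int]_m) : quadpoly m :=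
  fun i j => if i == j then (a 0 i)%:~R else 0.

Definition Cpoly (m : nat) (a : 'rV[int]_m) (sigma : int) : quadpoly m :=
  fun i j => (sigma%:~R / 2) * (lin_sq a i j + lin_sq2 a i j).

Definition lin_indep (m k : nat) (v : 'I_k -> 'rV[int]_m) : Prop :=
  forall c : 'I_k -> int, \sum_(i < k) c i *: v i = 0 -> forall i, c i = 0.

(* If the quadratic parts [sum_l n_l C(a_l, sigma)] vanish, comparing the
   coefficients of [e_i e_j] (i < j) and of [e_i^2] against the linear relation
   [sum_l n_l a_l = 0] shows that [sum_l n_l a_l,i a_l,j = 0] for all [i, j].
   Hence for every coordinate [i], [sum_l n_l (a_l,i - a_0,i) a_l = 0]; the
   term [l = 0] drops out, so independence of [a_1, ..., a_k] forces
   [n_l (a_l - a_0) = 0], i.e. [n_l = 0] for [l >= 1] because [a_l <> a_0].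
   The relation then reads [n_0 a_0 = 0], contradicting [n_0 <> 0] and
   [a_0 <> 0]. *)
From HB Require Import structures.
From mathcomp Require Import all_boot all_order all_algebra ring.
Set Implicit Arguments. Unset Strict Implicit. Unset Printing Implicit Defensive.
Import Order.TTheory GRing.Theory Num.Theory.
Local Open Scope ring_scope.

Lemma combination_entry (I : finType) (m : nat) (c : I -> int)
    (a : I -> 'rV[int]_m) j :
  (\sum_l c l *: a l) 0 j = \sum_l c l * a l 0 j.
Proof. by rewrite summxE; apply: eq_bigr => l _; rewrite mxE. Qed.

Section WeightedMoments.

Variables (I : finType) (m : nat) (n : I -> int) (a : I -> 'rV[int]_m).

Lemma sum_Cpoly_eq0 sigma i j : sigma != 0 ->
    \sum_l (n l)%:~R * Cpoly (a l) sigma i j = 0 ->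
  \sum_l (n l)%:~R * (lin_sq (a l) i j + lin_sq2 (a l) i j) = 0 :> rat.
Proof.
move=> sigma_neq0; under eq_bigr => l _ do rewrite /Cpoly mulrCA.
rewrite -mulr_sumr => /eqP; rewrite mulf_eq0 mulf_eq0 intr_eq0 invr_eq0.
by rewrite (negbTE sigma_neq0) /= => /eqP.
Qed.

Lemma sum_sq_coef_offdiag (i j : 'I_m) : (i < j)%N ->
  \sum_l (n l)%:~R * (lin_sq (a l) i j + lin_sq2 (a l) i j)
    = 2 * (\sum_l n l * (a l 0 i * a l 0 j))%:~R :> rat.
Proof.
move=> lt_ij; have neq_ij : (i == j) = false by rewrite -val_eqE /= ltn_eqF.
rewrite rmorph_sum mulr_sumr; apply: eq_bigr => l _.
by rewrite /lin_sq /lin_sq2 neq_ij lt_ij addr0 !rmorphM /=; ring.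
Qed.

Lemma sum_sq_coef_diag (i : 'I_m) :
  \sum_l (n l)%:~R * (lin_sq (a l) i i + lin_sq2 (a l) i i)
    = (\sum_l n l * (a l 0 i * a l 0 i))%:~R
      + (\sum_l n l * a l 0 i)%:~R :> rat.
Proof.
rewrite !rmorph_sum -big_split /=; apply: eq_bigr => l _.
by rewrite /lin_sq /lin_sq2 eqxx mulrDr !rmorphM.
Qed.

Lemma weighted_products_eq0 :
    \sum_l n l *: a l = 0 ->
    (forall i j, \sum_l (n l)%:~R * (lin_sq (a l) i j + lin_sq2 (a l) i j)
                   = 0 :> rat) ->
  forall i j, \sum_l n l * (a l 0 i * a l 0 j) = 0.
Proof.
move=> rel coef_eq0.
have lin_eq0 j : \sum_l n l * a l 0 j = 0.
  by rewrite -combination_entry rel mxE.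
have offdiag (i j : 'I_m) : (i < j)%N -> \sum_l n l * (a l 0 i * a l 0 j) = 0.
  move=> lt_ij; have /eqP := coef_eq0 i j.
  by rewrite sum_sq_coef_offdiag // mulf_eq0 intr_eq0 => /orP[//|/eqP].
move=> i j; case: (ltngtP i j) => [|lt_ji|/val_inj <-]; first exact: offdiag.
  by rewrite -[RHS](offdiag _ _ lt_ji); apply: eq_bigr => l _; rewrite (mulrC (a l 0 i)).
have /eqP := coef_eq0 i i.
by rewrite sum_sq_coef_diag lin_eq0 addr0 intr_eq0 => /eqP.
Qed.

Lemma shifted_relation :
    \sum_l n l *: a l = 0 ->
    (forall i j, \sum_l n l * (a l 0 i * a l 0 j) = 0) ->
  forall (b : 'rV[int]_m) i, \sum_l (n l * (a l 0 i - b 0 i)) *: a l = 0.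
Proof.
move=> rel prod_eq0 b i; apply/rowP => j; rewrite combination_entry mxE.
transitivity (\sum_l n l * (a l 0 i * a l 0 j)
              - b 0 i * \sum_l n l * a l 0 j).
  rewrite mulr_sumr -sumrB; apply: eq_bigr => l _.
  by rewrite mulrBr mulrBl !mulrA (mulrC (b 0 i)).
by rewrite prod_eq0 -combination_entry rel mxE mulr0 subr0.
Qed.

End WeightedMoments.

Lemma lift_weights_eq0 (m k : nat) (a : 'I_k.+1 -> 'rV[int]_m)
    (c : 'I_k.+1 -> int) :
    lin_indep (fun j : 'I_k => a (lift ord0 j)) ->
    \sum_l c l *: a l = 0 -> c ord0 = 0 ->
  forall j, c (lift ord0 j) = 0.
Proof.
move=> indep rel c0_eq0; apply: indep.
by move: rel; rewrite big_ord_recl c0_eq0 scale0r add0r.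
Qed.

Theorem mainTheorem9 (m k : nat) (sigma : int) (a : 'I_k.+1 -> 'rV[int]_m)
    (n : 'I_k.+1 -> int) :
  (sigma = 1 \/ sigma = -1) ->
  (0 < k)%N ->
  a ord0 != 0 ->
  (forall i : 'I_k, a ord0 != a (lift ord0 i)) ->
  lin_indep (fun i : 'I_k => a (lift ord0 i)) ->
  n ord0 != 0 ->
  \sum_(l < k.+1) n l *: a l = 0 ->
  (fun i j => \sum_(l < k.+1) (n l)%:~R * Cpoly (a l) sigma i j)
    <> (fun _ _ => 0 : rat).
Proof.
move=> sigma_pm _ a0_neq0 a0_neq_lift indep n0_neq0 rel C_eq0.
have sigma_neq0 : sigma != 0 by case: sigma_pm => ->.
have prod_eq0 := weighted_products_eq0 rel
  (fun i j => sum_Cpoly_eq0 sigma_neq0 (congr1 (fun f => f i j) C_eq0)).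
have n_lift_eq0 (j : 'I_k) : n (lift ord0 j) = 0.
  have /eqP : n (lift ord0 j) *: (a (lift ord0 j) - a ord0) = 0.
    apply/rowP => i; rewrite !mxE.
    apply: (lift_weights_eq0 indep (shifted_relation rel prod_eq0 (a ord0) i)).
    by rewrite subrr mulr0.
  by rewrite scalemx_eq0 subr_eq0 [a _ == _]eq_sym (negbTE (a0_neq_lift j)) orbF => /eqP.
move: rel; rewrite big_ord_recl big1 => [|j _]; last by rewrite n_lift_eq0 scale0r.
by rewrite addr0 => /eqP; rewrite scalemx_eq0 (negbTE n0_neq0) (negbTE a0_neq0).
Qed.
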